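(* Let $p\in(0,1)$, let $X,\gamma$ satisfy the standing assumptions in the context, and let $0\le x_0<\mathbb E[\gamma X]$. Let $q=\inf\{\mathrm{VaR}_p(g(X)):g\in\mathcal G_{\rm ns}\}$ and assume $q>0$ and $\mathbb P\big((X-q)\gamma\le\mathrm{VaR}_p((X-q)\gamma)\big)=p$. Then the problem of minimizing $\mathrm{VaR}_p(g(X))$ over $g\in\mathcal G_{\rm ns}$ admits a $\mathbb P$-a.s. unique solution, given by $g_X(X)=X\mathds 1_{\{(X-q)\gamma>c\}}+(X\wedge q)\mathds 1_{\{(X-q)\gamma\le c\}}$, where $c=\mathrm{VaR}_p((X-q)\gamma)$.
   Context: $(\Omega,\mathcal F,\mathbb P)$ is atomless. $\mathrm{VaR}_p(Y)=\inf\{x:\mathbb P(Y\le x)\ge p\}$. Standing assumptions: $X\ge0$ is a random variable whose distribution has a positive density on its support; $\gamma:\mathbb R\to\mathbb R$ is continuous and strictly positive; $\gamma$ also denotes $\gamma(X)$; $\mathbb E[\gamma]=1$, $\mathbb E[\gamma X]<\infty$. With $\mathcal G_1$ the measurable functions $\mathbb R\to\mathbb R$, $\mathcal G_{\rm ns}=\{g\in\mathcal G_1:\mathbb E[\gamma g(X)]\ge x_0,\ 0\le g(X)\le X\}$. *)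

From HB Require Import structures.
From mathcomp Require Import all_boot all_order all_algebra.
From mathcomp Require Import all_classical all_reals all_analysis.
Set Implicit Arguments. Unset Strict Implicit. Unset Printing Implicit Defensive.
Import Order.TTheory GRing.Theory Num.Theory.
Import numFieldNormedType.Exports.
Local Open Scope classical_set_scope.
Local Open Scope ring_scope.

Definition atomless d (T : measurableType d) (R : realType)
  (P : probability T R) : Prop :=
  forall A : set T, measurable A -> (0 < P A)%E ->
    exists2 B : set T, measurable B & B `<=` A /\ (0 < P B)%E /\ (P B < P A)%E.

Definition law_support d (T : measurableType d) (R : realType)
  (P : probability T R) (X : T -> R) : set R :=
  [set x | forall e : R, 0 < e -> (0 < P (X @^-1` ball x e))%E].

Definition has_pos_density_on_support d (T : measurableType d) (R : realType)
  (P : probability T R) (X : T -> R) : Prop :=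
  exists f : R -> R,
    measurable_fun setT f /\ (forall x, 0 <= f x) /\
    (forall A : set R, measurable A ->
        P (X @^-1` A) = (\int[lebesgue_measure]_(x in A) (f x)%:E)%E) /\
    (forall x, law_support P X x -> 0 < f x).

Definition VaR d (T : measurableType d) (R : realType)
  (P : probability T R) (p : R) (Y : T -> R) : R :=
  inf [set x : R | (p%:E <= P [set w | (Y w <= x)%R])%E].

Definition G_ns d (T : measurableType d) (R : realType)
  (P : probability T R) (X : T -> R) (gamma : R -> R) (x0 : R) : set (R -> R) :=
  [set g | measurable_fun setT g /\
           (x0%:E <= 'E_P[fun w => (gamma (X w) * g (X w))%R])%E /\
           (forall w, (0 <= g (X w) <= X w)%R)].

From HB Require Import structures.
From mathcomp Require Import all_boot all_order all_algebra.
From mathcomp Require Import all_classical all_reals all_analysis.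
From mathcomp Require Import measurable_realfun lra.
Import Order.TTheory GRing.Theory Num.Theory.
Import numFieldNormedType.Exports.
Local Open Scope classical_set_scope.
Local Open Scope ring_scope.
Set Implicit Arguments.
Unset Strict Implicit.
Unset Printing Implicit Defensive.

(* Lagrangian argument.  Write [Z = gamma X] and [g_k = capped_transfer k],
   so that [g_q] is the paper's [g_X].  For [k < q], VaR_p(g_k(X)) <= k < q,
   so [g_k] violates the budget; letting [k] tend to [q] gives
   [E[Z g_q(X)] <= x0], hence [c >= 0] (for [c < 0], [g_q(X) = X]).  Then,
   pointwise, [g_q x] maximises [y |-> Z y + c 1{y <= q}] over [0 <= y <= x],
   and raising the level from [q] to [v >= q] gains at most [(v - q) Z]; in
   expectation, every feasible [g] satisfies
     E[Z g(X)] + c P(g(X) <= v) <= E[Z g_q(X)] + c p + (v - q).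
   Feasible [g] with VaR_p(g(X)) < q + e give [x0 <= E[Z g_q(X)]], so [g_q]
   is feasible with VaR_p(g_q(X)) <= q, i.e. optimal.  For an optimal [g] the
   integrated inequality at [v = q] is an equality, so the pointwise one is an
   equality a.s.; its equality cases and [P(g(X) <= q) >= p = P(g_q(X) <= q)]
   give [g(X) = g_q(X)] a.s. *)

Lemma measurable_sublevel_set d (T : measurableType d) (R : realType)
    (Y : T -> R) (v : R) :
  measurable_fun setT Y -> measurable [set w | Y w <= v].
Proof.
move=> mY; rewrite -[X in measurable X]setTI.
exact: mY measurableT _ (measurable_itv `]-oo, v]).
Qed.

Lemma indic_sublevel_set (T : Type) (R : realType) (Y : T -> R) (v : R) (w : T) :
  \1_[set w | Y w <= v] w = (Y w <= v)%R%:R :> R.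
Proof. by rewrite indicE (mem_setE (fun w => Y w <= v)). Qed.

Lemma measureD_eq0_swap d (T : measurableType d) (R : realType)
    (mu : {finite_measure set T -> \bar R}) (A B : set T) :
  measurable A -> measurable B -> (mu A <= mu B)%E ->
  mu (B `\` A) = 0%E -> mu (A `\` B) = 0%E.
Proof.
move=> mA mB muAB muBA; apply/eqP; rewrite eq_le measure_ge0 andbT.
have muI_fin : mu (A `&` B) \is a fin_num by rewrite fin_num_measure //; exact: measurableI.
rewrite -(leeD2rE _ _ muI_fin) add0e -measureDI // (le_trans muAB) //.
rewrite (measureDI mu mB mA) setIC -[leRHS]add0e leeD2rE //.
by move/eqP: muBA; rewrite eq_le => /andP[].
Qed.

Section value_at_risk.
Context d (T : measurableType d) (R : realType) (P : probability T R).
Variables (p : R) (Y : T -> R).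
Hypotheses (p_gt0 : 0 < p) (p_lt1 : p < 1) (mY : measurable_fun setT Y).

Let Y_RV : {RV P >-> R} := mfun_Sub (mem_set mY).

Let cdfE x : cdf Y_RV x = P [set w | Y w <= x].
Proof. by []. Qed.

Let level_set := [set x | (p%:E <= cdf Y_RV x)%E].

Let level_set_nonempty : level_set !=set0.
Proof.
have p_lt1E : (p%:E < 1)%E by rewrite lte_fin.
have [M [_ cdf_gt]] := cvg_cdfy1 Y_RV (open_ereal_gt' p_lt1E).
by exists (M + 1); rewrite /level_set /= ltW ?cdf_gt ?ltrDl.
Qed.

Let level_set_lbound : has_lbound level_set.
Proof.
have p_gt0E : (0 < p%:E)%E by rewrite lte_fin.
have [M [_ cdf_lt]] := cvg_cdfNy0 Y_RV (open_ereal_lt' p_gt0E).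
exists M => x /= px; rewrite leNgt; apply/negP => /cdf_lt /=.
by rewrite ltNge px.
Qed.

Lemma VaR_attained : (p%:E <= P [set w | (Y w <= VaR P p Y)%R])%E.
Proof.
rewrite -cdfE; apply: cvge_to_ge (@cdf_right_continuous _ _ _ P Y_RV (VaR P p Y)) _.
near=> x; have [y py yx] : exists2 y, level_set y & y < x.
  by apply: inf_lt level_set_nonempty _; near: x; exact: nbhs_right_gt.
by apply: le_trans py _; rewrite cdf_nondecreasing ?ltW.
Unshelve. all: by end_near. Qed.

Lemma VaR_leP v : VaR P p Y <= v <-> (p%:E <= P [set w | (Y w <= v)%R])%E.
Proof.
split=> [VaR_le_v|]; last exact: ge_inf level_set_lbound v.
by apply: le_trans VaR_attained _; rewrite -!cdfE cdf_nondecreasing.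
Qed.

Lemma VaR_ge0 : (forall w, 0 <= Y w) -> 0 <= VaR P p Y.
Proof.
move=> Y_ge0; rewrite leNgt; apply/negP => VaR_lt0.
suff Y_le_VaR0 : [set w | Y w <= VaR P p Y] = set0.
  by have := VaR_attained; rewrite Y_le_VaR0 measure0 leNgt lte_fin p_gt0.
by apply/seteqP; split => // w /= /le_lt_trans /(_ VaR_lt0); rewrite ltNge Y_ge0.
Qed.

End value_at_risk.

Section ge0_expectation.
Context d (T : measurableType d) (R : realType) (P : probability T R).
Local Open Scope ereal_scope.

Lemma ge0_expectationD (f g : T -> R) :
  measurable_fun setT f -> measurable_fun setT g ->
  (forall w, 0 <= f w)%R -> (forall w, 0 <= g w)%R ->
  'E_P[fun w => (f w + g w)%R] = 'E_P[f] + 'E_P[g].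
Proof.
move=> mf mg f0 g0; rewrite unlock; under eq_integral do rewrite EFinD.
by apply: ge0_integralD => //; by [move=> w _; rewrite lee_fin ?f0 ?g0|exact/measurable_EFinP].
Qed.

Lemma ge0_expectationZl (k : R) (f : T -> R) : (0 <= k)%R ->
  measurable_fun setT f -> (forall w, 0 <= f w)%R ->
  'E_P[fun w => (k * f w)%R] = k%:E * 'E_P[f].
Proof.
move=> k0 mf f0; rewrite unlock; under eq_integral do rewrite EFinM.
by apply: ge0_integralZl_EFin => //; by [move=> w _; rewrite lee_fin|exact/measurable_EFinP].
Qed.

Lemma expectation_scaled_indic (k : R) (A : set T) : (0 <= k)%R -> measurable A ->
  'E_P[fun w => (k * \1_A w)%R] = k%:E * P A.
Proof. by move=> k0 mA; rewrite ge0_expectationZl ?expectation_indic. Qed.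

Lemma le_expectation_ae_eq (f g : T -> R) :
  measurable_fun setT f -> measurable_fun setT g ->
  (forall w, 0 <= f w)%R -> (forall w, f w <= g w)%R ->
  'E_P[g] \is a fin_num -> 'E_P[g] <= 'E_P[f] -> {ae P, forall w, f w = g w}.
Proof.
move=> mf mg f0 fg Eg_fin Eg_le.
have mgf : measurable_fun setT (fun w => g w - f w)%R by exact: measurable_funB.
have gf0 w : (0 <= g w - f w)%R by rewrite subr_ge0.
have Eg : 'E_P[g] = 'E_P[f] + 'E_P[fun w => (g w - f w)%R].
  by rewrite -ge0_expectationD //; congr 'E_P[_]; apply/funext => w; rewrite addrC subrK.
have Ef_fin : 'E_P[f] \is a fin_num.
  rewrite ge0_fin_numE ?expectation_ge0 // (@le_lt_trans _ _ 'E_P[g]) ?ltey_eq ?Eg_fin //.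
  by apply: expectation_le => // [w|]; [exact: le_trans (fg w)|exact: aeW].
have Egf0 : 'E_P[fun w => (g w - f w)%R] = 0.
  apply/eqP; rewrite eq_le expectation_ge0 // andbT.
  by rewrite -(leeD2lE _ _ Ef_fin) -Eg adde0.
have /(ae_eq_integral_abs P measurableT ((measurable_EFinP _ _).2 mgf)).1 : 
    \int[P]_w `|(g w - f w)%:E| = 0.
  by rewrite -[RHS]Egf0 unlock; apply: eq_integral => w _; rewrite gee0_abs ?lee_fin.
by apply: filterS => w /(_ I) [/eqP]; rewrite subr_eq0 => /eqP.
Qed.

End ge0_expectation.

Section capped_transfer.
Variables (R : realType) (gamma : R -> R) (q c : R).

Definition capped_transfer (k x : R) : R :=
  if c < (x - q) * gamma x then x else Num.min x k.

Lemma capped_transfer_ge0_le k x : 0 <= k -> 0 <= x ->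
  0 <= capped_transfer k x <= x.
Proof.
rewrite /capped_transfer => k0 x0; case: ifP => _; first by rewrite x0 lexx.
by rewrite ge_min lexx le_min x0 k0.
Qed.

Lemma capped_transfer_le_cap k x : (x - q) * gamma x <= c ->
  capped_transfer k x <= k.
Proof. by rewrite /capped_transfer ltNge => ->; rewrite ge_min lexx orbT. Qed.

Lemma capped_transfer_le_shift k e x : 0 <= e ->
  capped_transfer k x <= capped_transfer (k - e) x + e.
Proof.
rewrite /capped_transfer => e0; case: ifP => _; first by rewrite lerDl.
rewrite /Num.min; case: ifP; case: ifP => /=; lra.
Qed.

Lemma capped_transfer_id x : c < 0 -> 0 < gamma x -> capped_transfer q x = x.
Proof.
rewrite /capped_transfer => c_lt0 gx_gt0; case: ltP => // cx.
by apply/min_idPl; rewrite -subr_le0 -(pmulr_lle0 _ gx_gt0) ltW ?(le_lt_trans cx).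
Qed.

Lemma measurable_capped_transfer k : measurable_fun setT gamma ->
  measurable_fun setT (capped_transfer k).
Proof.
move=> mgamma; apply: measurable_fun_ifT; last exact: measurable_minr.
  by apply: measurable_fun_ltr => //; apply: measurable_funM => //; exact: measurable_funB.
exact: measurable_id.
Qed.

Hypothesis c_ge0 : 0 <= c.

Lemma capped_transfer_leE x : 0 < gamma x ->
  (capped_transfer q x <= q) = ((x - q) * gamma x <= c).
Proof.
rewrite /capped_transfer => gx_gt0; case: ltP => [cx|_]; last by rewrite ge_min lexx orbT.
by apply/negbTE; rewrite -ltNge -subr_gt0 -(pmulr_lgt0 _ gx_gt0) (le_lt_trans c_ge0).
Qed.

Lemma capped_transfer_lagrangian x y v : 0 < gamma x -> 0 <= y <= x -> q <= v ->
  gamma x * y + c * (y <= v)%R%:R <=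
  gamma x * capped_transfer q x + c * (capped_transfer q x <= q)%R%:R + (v - q) * gamma x.
Proof.
move=> gx_gt0 /andP[y_ge0 y_le_x] q_le_v; rewrite (capped_transfer_leE gx_gt0).
rewrite /capped_transfer.
case: (ltP c) => cx; case: (leP y v) => yv; case: (ltP x q) => xq /=;
  rewrite ?mulr1 ?mulr0; nra.
Qed.

Lemma capped_transfer_lagrangian_eq x y : 0 < gamma x -> 0 <= y <= x ->
  gamma x * y + c * (y <= q)%R%:R =
    gamma x * capped_transfer q x + c * (capped_transfer q x <= q)%R%:R ->
  (y <= q -> capped_transfer q x <= q) /\
  ((capped_transfer q x <= q -> y <= q) -> y = capped_transfer q x).
Proof.
move=> gx_gt0 /andP[y_ge0 y_le_x]; rewrite (capped_transfer_leE gx_gt0).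
rewrite /capped_transfer.
case: (ltP c) => cx; case: (leP y q) => yq; case: (ltP x q) => xq /=;
  rewrite ?mulr1 ?mulr0 => E; split=> //; try nra.
Qed.

End capped_transfer.

Section optimal_transfer.
Context d (T : measurableType d) (R : realType) (P : probability T R).
Variables (X : {RV P >-> R}) (gamma : R -> R) (p x0 q c : R).
Hypotheses (X_ge0 : forall w, 0 <= X w) (mgamma : measurable_fun setT gamma)
  (gamma_gt0 : forall x, 0 < gamma x)
  (E_gamma : ('E_P[fun w => gamma (X w)] = 1)%E)
  (p_gt0 : 0 < p) (p_lt1 : p < 1)
  (x0_lt : (x0%:E < 'E_P[fun w => (gamma (X w) * X w)%R])%E).
Local Notation G := (G_ns P X gamma x0).
Hypotheses (q_def : q = inf [set VaR P p (fun w => g (X w)) | g in G])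
  (q_gt0 : 0 < q) (PA : P [set w | (X w - q) * gamma (X w) <= c] = p%:E).
Local Notation h := (capped_transfer gamma q c).

Let mX : measurable_fun setT X := measurable_funPT X.

Let measurable_fun_X (g : R -> R) :
  measurable_fun setT g -> measurable_fun setT (fun w => g (X w)).
Proof. by move=> mg; exact: measurableT_comp mg mX. Qed.

Let measurable_weighted (g : R -> R) :
  measurable_fun setT g -> measurable_fun setT (fun w => gamma (X w) * g (X w)).
Proof. by move=> mg; apply: measurable_funM; exact: measurable_fun_X. Qed.

Let weighted_ge0 (g : R -> R) :
  (forall w, 0 <= g (X w)) -> forall w, 0 <= gamma (X w) * g (X w).
Proof. by move=> g0 w; apply: mulr_ge0 => //; exact: ltW. Qed.

Let measurable_threshold_set : measurable [set w | (X w - q) * gamma (X w) <= c].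
Proof.
apply: measurable_sublevel_set; apply: measurable_funM; first exact: measurable_funB.
exact: measurable_fun_X.
Qed.

Let mh k : measurable_fun setT (h k).
Proof. exact: measurable_capped_transfer. Qed.

Let h_ge0_le k w : 0 <= k -> 0 <= h k (X w) <= X w.
Proof. by move=> k0; exact: capped_transfer_ge0_le. Qed.

Let weighted_h_ge0 k : 0 <= k -> forall w, 0 <= gamma (X w) * h k (X w).
Proof. by move=> k_ge0; apply: weighted_ge0 => w; case/andP: (h_ge0_le w k_ge0). Qed.

Let G_ns_id : G id.
Proof.
split; first exact: measurable_id.
by split=> [|w]; [exact: ltW|rewrite X_ge0 lexx].
Qed.

Lemma q_le_VaR g : G g -> q <= VaR P p (fun w => g (X w)).
Proof.
move=> Gg; rewrite q_def; apply: ge_inf; last by exists g.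
exists 0 => _ [g' [mg' [_ g'_bd]] <-].
by apply: VaR_ge0 => // [|w]; [exact: measurable_fun_X|case/andP: (g'_bd w)].
Qed.

Lemma exists_G_ns_VaR_lt e : 0 < e ->
  exists2 g, G g & VaR P p (fun w => g (X w)) < q + e.
Proof.
move=> e_gt0; have [_ [g Gg <-] VaR_lt] : exists2 y,
    [set VaR P p (fun w => g (X w)) | g in G] y & y < q + e.
  by apply: inf_lt; [exists (VaR P p X), id|rewrite -q_def ltrDl].
by exists g.
Qed.

Let VaR_X_leP g v : measurable_fun setT g ->
  VaR P p (fun w => g (X w)) <= v <-> (p%:E <= P [set w | (g (X w) <= v)%R])%E.
Proof. by move=> mg; apply: VaR_leP => //; exact: measurable_fun_X. Qed.

Lemma VaR_capped_transfer_le k : 0 <= k -> VaR P p (fun w => h k (X w)) <= k.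
Proof.
move=> k0; apply/VaR_X_leP => //.
rewrite -PA le_measure ?inE //; last by move=> w; exact: capped_transfer_le_cap.
exact/measurable_sublevel_set/measurable_fun_X.
Qed.

Lemma expectation_capped_transfer_lt k : 0 <= k < q ->
  ('E_P[fun w => (gamma (X w) * h k (X w))%R] < x0%:E)%E.
Proof.
move=> /andP[k_ge0 k_lt_q]; rewrite ltNge; apply/negP => x0_le.
have Gh : G (h k) by split=> //; split=> // w; exact: h_ge0_le.
by have := le_trans (q_le_VaR Gh) (VaR_capped_transfer_le k_ge0); rewrite leNgt k_lt_q.
Qed.

Lemma expectation_transfer_le :
  ('E_P[fun w => (gamma (X w) * h q (X w))%R] <= x0%:E)%E.
Proof.
apply/lee_addgt0Pr => e e_gt0; pose e' := Num.min e q.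
have e'_gt0 : 0 < e' by rewrite lt_min e_gt0 q_gt0.
have qe'_ge0 : 0 <= q - e' by rewrite subr_ge0 ge_min lexx orbT.
have me' : measurable_fun setT (fun w => e' * gamma (X w)).
  by apply: measurable_funM => //; exact: measurable_fun_X.
have e'_ge0 w : 0 <= e' * gamma (X w) by rewrite mulr_ge0 // ltW.
apply: (@le_trans _ _
    ('E_P[fun w => (gamma (X w) * h (q - e') (X w) + e' * gamma (X w))%R])%E).
  apply: expectation_le => //.
  - exact: measurable_weighted.
  - by apply: measurable_funD => //; exact: measurable_weighted.
  - exact: weighted_h_ge0 (ltW q_gt0).
  - by move=> w; rewrite addr_ge0 // weighted_h_ge0.
  - apply: aeW => w; rewrite [e' * _]mulrC -mulrDr ler_pM2l //.
    by rewrite capped_transfer_le_shift // ltW.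
rewrite ge0_expectationD //; [|exact: measurable_weighted|exact: weighted_h_ge0].
rewrite ge0_expectationZl //; last 3 first.
- exact: ltW.
- exact: measurable_fun_X.
- by move=> w; exact: ltW.
rewrite E_gamma mule1 leeD // ?lee_fin ?ge_min ?lexx //.
by rewrite ltW // expectation_capped_transfer_lt // qe'_ge0 ltrBlDr ltrDl.
Qed.


Lemma threshold_ge0 : 0 <= c.
Proof.
rewrite leNgt; apply/negP => c_lt0; have := expectation_transfer_le.
suff -> : (fun w => gamma (X w) * h q (X w)) = (fun w => gamma (X w) * X w).
  by rewrite leNgt x0_lt.
by apply/funext => w; rewrite capped_transfer_id.
Qed.

Lemma probability_transfer_le : P [set w | h q (X w) <= q] = p%:E.
Proof.
rewrite -PA; congr (P _); apply/funext => w /=.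
by rewrite (capped_transfer_leE _ threshold_ge0).
Qed.

Let lagrangian (g : R -> R) (v : R) (w : T) :=
  gamma (X w) * g (X w) + c * \1_[set w | g (X w) <= v] w.

Let measurable_lagrangian g v :
  measurable_fun setT g -> measurable_fun setT (lagrangian g v).
Proof.
move=> mg; apply: measurable_funD; first exact: measurable_weighted.
apply: measurable_funM => //; apply: measurable_indic.
exact/measurable_sublevel_set/measurable_fun_X.
Qed.

Let lagrangian_ge0 g v : (forall w, 0 <= g (X w)) -> forall w, 0 <= lagrangian g v w.
Proof.
by move=> g_ge0 w; rewrite addr_ge0 ?weighted_ge0 // mulr_ge0 ?threshold_ge0.
Qed.

Lemma expectation_lagrangian (g : R -> R) v : measurable_fun setT g ->
  (forall w, 0 <= g (X w)) ->
  ('E_P[lagrangian g v] =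
   'E_P[fun w => (gamma (X w) * g (X w))%R] + c%:E * P [set w | (g (X w) <= v)%R])%E.
Proof.
move=> mg g_ge0; rewrite ge0_expectationD ?expectation_scaled_indic ?threshold_ge0 //.
- exact/measurable_sublevel_set/measurable_fun_X.
- exact: measurable_weighted.
- apply: measurable_funM => //; apply: measurable_indic.
  exact/measurable_sublevel_set/measurable_fun_X.
- exact: weighted_ge0.
- by move=> w; rewrite mulr_ge0 ?threshold_ge0 // indicE.
Qed.

Let lagrangian_le (g : R -> R) v w : 0 <= g (X w) <= X w -> q <= v ->
  lagrangian g v w <= lagrangian (h q) q w + (v - q) * gamma (X w).
Proof.
move=> g_bd q_le_v; rewrite /lagrangian !indic_sublevel_set.
exact: capped_transfer_lagrangian threshold_ge0 _ _ _ (gamma_gt0 _) g_bd q_le_v.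
Qed.

Lemma expectation_lagrangian_le g v : G g -> q <= v ->
  ('E_P[lagrangian g v] <= 'E_P[lagrangian (h q) q] + (v - q)%:E)%E.
Proof.
move=> [mg [_ g_bd]] q_le_v.
have mvq : measurable_fun setT (fun w => (v - q) * gamma (X w)).
  by apply: measurable_funM => //; exact: measurable_fun_X.
have vq_ge0 w : 0 <= (v - q) * gamma (X w) by rewrite mulr_ge0 ?subr_ge0 // ltW.
have hq_ge0 w : 0 <= h q (X w) by case/andP: (h_ge0_le w (ltW q_gt0)).
rewrite -[(v - q)%:E]mule1 -E_gamma -ge0_expectationZl ?subr_ge0 //; last 2 first.
- exact: measurable_fun_X.
- by move=> w; exact: ltW.
rewrite -ge0_expectationD //; last 2 first.
- exact: measurable_lagrangian.
- exact: lagrangian_ge0.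
apply: expectation_le => //.
- exact: measurable_lagrangian.
- by apply: measurable_funD => //; exact: measurable_lagrangian.
- by apply: lagrangian_ge0 => w; case/andP: (g_bd w).
- by move=> w; rewrite addr_ge0 // lagrangian_ge0.
- by apply: aeW => w; exact: lagrangian_le.
Qed.

Lemma expectation_transfer_ge :
  (x0%:E <= 'E_P[fun w => (gamma (X w) * h q (X w))%R])%E.
Proof.
apply/lee_addgt0Pr => e e_gt0.
have [g Gg VaR_lt] := exists_G_ns_VaR_lt e_gt0.
have Gg' := Gg; case: Gg' => mg [x0_le g_bd].
have /(VaR_X_leP _ mg) p_le := ltW VaR_lt.
have := expectation_lagrangian_le Gg (ler_wpDr (ltW e_gt0) (lexx q)).
rewrite !expectation_lagrangian //; last 2 first.
- by move=> w; case/andP: (h_ge0_le w (ltW q_gt0)).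
- by move=> w; case/andP: (g_bd w).
rewrite probability_transfer_le [q + e - q]addrC addKr => E_lagrangian_le.
have cp_fin : (c%:E * p%:E)%E \is a fin_num by [].
rewrite -(leeD2rE _ _ cp_fin) addeAC; apply: le_trans E_lagrangian_le.
by apply: leeD => //; rewrite lee_wpmul2l ?lee_fin ?threshold_ge0.
Qed.

Lemma expectation_transfer :
  ('E_P[fun w => (gamma (X w) * h q (X w))%R] = x0%:E)%E.
Proof. by apply/eqP; rewrite eq_le expectation_transfer_le expectation_transfer_ge. Qed.

Lemma G_ns_transfer : G (h q).
Proof.
split=> //; split=> [|w]; first by rewrite expectation_transfer.
exact: h_ge0_le (ltW q_gt0).
Qed.

Lemma transfer_optimal g : G g ->
  VaR P p (fun w => h q (X w)) <= VaR P p (fun w => g (X w)).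
Proof. by move=> Gg; rewrite (le_trans (VaR_capped_transfer_le (ltW q_gt0))) ?q_le_VaR. Qed.

Let lagrangian_eq_cases (g : R -> R) w : 0 <= g (X w) <= X w ->
  lagrangian g q w = lagrangian (h q) q w ->
  (g (X w) <= q -> h q (X w) <= q) /\
  ((h q (X w) <= q -> g (X w) <= q) -> g (X w) = h q (X w)).
Proof.
move=> g_bd; rewrite /lagrangian !indic_sublevel_set.
exact: capped_transfer_lagrangian_eq threshold_ge0 _ _ (gamma_gt0 _) g_bd.
Qed.

Lemma transfer_unique g : G g ->
  (forall g', G g' -> VaR P p (fun w => g (X w)) <= VaR P p (fun w => g' (X w))) ->
  {ae P, forall w, g (X w) = h q (X w)}.
Proof.
move=> Gg g_opt; have Gg' := Gg; case: Gg' => mg [x0_le g_bd].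
have g_ge0 w : 0 <= g (X w) by case/andP: (g_bd w).
have hq_ge0 w : 0 <= h q (X w) by case/andP: (h_ge0_le w (ltW q_gt0)).
have /(VaR_X_leP _ mg) p_le : VaR P p (fun w => g (X w)) <= q.
  exact: le_trans (g_opt _ G_ns_transfer) (VaR_capped_transfer_le (ltW q_gt0)).
pose A := [set w | h q (X w) <= q]; pose B := [set w | g (X w) <= q].
have mA : measurable A by exact/measurable_sublevel_set/measurable_fun_X.
have mB : measurable B by exact/measurable_sublevel_set/measurable_fun_X.
have E_lagrangian : {ae P, forall w, lagrangian g q w = lagrangian (h q) q w}.
  apply: le_expectation_ae_eq; try exact: measurable_lagrangian.
  - exact: lagrangian_ge0.
  - by move=> w; have := lagrangian_le (g_bd w) (lexx q); rewrite subrr mul0r addr0.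
  - by rewrite expectation_lagrangian // expectation_transfer probability_transfer_le.
  rewrite !expectation_lagrangian // expectation_transfer probability_transfer_le.
  by apply: leeD => //; rewrite lee_wpmul2l ?lee_fin ?threshold_ge0.
have cases : {ae P, forall w, (B w -> A w) /\ ((A w -> B w) -> g (X w) = h q (X w))}.
  by apply: filterS E_lagrangian => w; exact: lagrangian_eq_cases.
have BA0 : P (B `\` A) = 0%E.
  apply/negligibleP; first exact: measurableD.
  by apply: negligibleS cases => w [Bw nAw] [/(_ Bw)].
have AB0 : P (A `\` B) = 0%E.
  have PA_le : (P A <= P B)%E by rewrite /A probability_transfer_le.
  exact: measureD_eq0_swap mA mB PA_le BA0.
have : {ae P, forall w, ~ (A `\` B) w}.
  exists (A `\` B); split => //; first exact: measurableD.
  by move=> w /= /contrapT.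
apply: filterS2 cases => w [_ g_eq] nAB; apply: g_eq => Aw.
by apply: contrapT => nBw; exact: nAB.
Qed.

End optimal_transfer.

Theorem corollary1 (d : measure_display) (T : measurableType d) (R : realType)
  (P : probability T R) (X : {RV P >-> R}) (gamma : R -> R) (p x0 : R) :
  atomless P ->
  (forall w, 0 <= X w) ->
  has_pos_density_on_support P X ->
  continuous gamma -> (forall x, 0 < gamma x) ->
  ('E_P[fun w => gamma (X w)] = 1)%E ->
  ('E_P[fun w => (gamma (X w) * X w)%R] < +oo)%E ->
  0 < p < 1 ->
  0 <= x0 -> (x0%:E < 'E_P[fun w => (gamma (X w) * X w)%R])%E ->
  let q := inf [set VaR P p (fun w => g (X w)) | g in G_ns P X gamma x0] in
  let c := VaR P p (fun w => (X w - q) * gamma (X w)) in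
  0 < q ->
  P [set w | (X w - q) * gamma (X w) <= c] = p%:E ->
  let gX := fun x : R => if c < (x - q) * gamma x then x else Num.min x q in
  [/\ G_ns P X gamma x0 gX,
      (forall g, G_ns P X gamma x0 g ->
         VaR P p (fun w => gX (X w)) <= VaR P p (fun w => g (X w))) &
      (forall g, G_ns P X gamma x0 g ->
         (forall h, G_ns P X gamma x0 h ->
            VaR P p (fun w => g (X w)) <= VaR P p (fun w => h (X w))) ->
         {ae P, forall w, g (X w) = gX (X w)})].
Proof.
move=> _ X_ge0 _ gamma_cont gamma_gt0 E_gamma _ /andP[p_gt0 p_lt1] _ x0_lt q c q_gt0 PA gX.
have mgamma := continuous_measurable_fun gamma_cont.
split.
- by apply: (G_ns_transfer (p := p)).
- by move=> g; apply: (transfer_optimal (p := p)).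
- by move=> g; apply: (transfer_unique (p := p)).
Qed.
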